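(* Fix $m\ge1$, $\omega\in\mathbb Z\setminus\{0\}$, and set $\kappa=2\pi\omega$. For every $\delta\in(0,1)$ there exist $\varepsilon_R=\varepsilon_R(m,\omega,\delta)>0$ and $C_{\delta,m,\omega}<\infty$ such that every smooth closed immersed planar curve $\gamma$ of length $1$, turning number $\omega$ and $E_m[\gamma]\le\varepsilon_R$ satisfies $$\int_\gamma R^2\,ds\le\delta\,\mathcal P+C_{\delta,m,\omega}E_m[\gamma]^2,$$ where $\mathcal P=\int_\gamma k_{s^{2m+2}}^2ds$ and $$R:=\mathcal K_m-(-1)^{m+1}\big(k_{s^{2m+2}}+\kappa^2k_{s^{2m}}\big)=(-1)^{m+1}(k^2-\kappa^2)k_{s^{2m}}-\sum_{j=1}^{m-1}(-1)^jk\,k_{s^{m-j}}k_{s^{m+j}}-\tfrac12k\,k_{s^m}^2.$$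
   Context: $s$ arclength, $k$ signed curvature, $k_{s^j}$ its $j$-th arclength derivative, $E_m[\gamma]=\frac12\int_\gamma k_{s^m}^2ds$, $\mathcal K_m=(-1)^{m+1}k_{s^{2m+2}}-\tfrac12 k\,k_{s^m}^2+k\sum_{r=1}^m(-1)^{r+1}k_{s^{m-r}}k_{s^{m+r}}$; turning number $\frac1{2\pi}\int k\,ds$. *)

From Stdlib Require Import Reals.
From Coquelicot Require Import Coquelicot.
Open Scope R_scope.

Definition smooth (f : R -> R) : Prop :=
  forall (n : nat) (s : R), ex_derive (Derive_n f n) s.

(* A smooth closed immersed planar curve of length 1, given by its
   arclength parametrization gamma = (gx, gy) : R -> R^2, 1-periodic,
   with unit speed. *)
Definition closed_unit_length_curve (gx gy : R -> R) : Prop :=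
  smooth gx /\ smooth gy /\
  (forall s, gx (s + 1) = gx s /\ gy (s + 1) = gy s) /\
  (forall s, (Derive gx s)^2 + (Derive gy s)^2 = 1).

Definition curv (gx gy : R -> R) (s : R) : R :=
  Derive gx s * Derive_n gy 2 s - Derive gy s * Derive_n gx 2 s.

Definition ks (gx gy : R -> R) (j : nat) (s : R) : R :=
  Derive_n (curv gx gy) j s.

Definition Em (m : nat) (gx gy : R -> R) : R :=
  / 2 * RInt (fun s => (ks gx gy m s)^2) 0 1.

Definition turning_number (gx gy : R -> R) : R :=
  / (2 * PI) * RInt (curv gx gy) 0 1.

Definition Km (m : nat) (gx gy : R -> R) (s : R) : R :=
  (-1)^(m+1) * ks gx gy (2*m+2) s
  - / 2 * curv gx gy s * (ks gx gy m s)^2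
  + curv gx gy s *
      sum_f 1 m (fun r => (-1)^(r+1) * ks gx gy (m - r) s * ks gx gy (m + r) s).

Definition Rrem (m : nat) (kappa : R) (gx gy : R -> R) (s : R) : R :=
  Km m gx gy s - (-1)^(m+1) * (ks gx gy (2*m+2) s + kappa^2 * ks gx gy (2*m) s).

Definition Pm (m : nat) (gx gy : R -> R) : R :=
  RInt (fun s => (ks gx gy (2*m+2) s)^2) 0 1.

From Stdlib Require Import Reals ZArith Lra Lia.
From Coquelicot Require Import Coquelicot.
Open Scope R_scope.

(* The turning number fixes the mean of the curvature to kappa, so k - kappa and
   every derivative k_{s^j} (j >= 1) vanish somewhere on the period.  A
   Wirtinger inequality then bounds sup |k_{s^j}|^2 (with k - kappa for j = 0)
   by 4 int k_{s^(j+1)}^2, and the chain int k_{s^j}^2 <= 4 int k_{s^(j+1)}^2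
   makes every factor of order < m uniformly O(E_m); together with E_m <= 1/2
   this also keeps k bounded.  Each term of R is such a factor (or, for
   k k_{s^m}^2, a sup bound of k_{s^m} through int k_{s^(m+1)}^2) times a
   derivative of order between m and 2m, so int R^2 <= C E_m max int k_{s^j}^2
   over m < j <= 2m.  Integration by parts gives
   2 a_(j+1) <= t a_(j+2) + a_j / t for a_j = int k_{s^j}^2, which bounds these
   middle norms by eta P + C_eta E_m. *)

Lemma smooth_ex_derive_n f : smooth f -> forall n x, ex_derive_n f n x.
Proof. intros Hf [|n] x; [exact I | apply Hf]. Qed.

Lemma Derive_n_S f n x : Derive_n f (S n) x = Derive_n (Derive f) n x.
Proof. rewrite <- Nat.add_1_r, <- Derive_n_comp. reflexivity. Qed.

Lemma smooth_ext f g : (forall x, f x = g x) -> smooth f -> smooth g.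
Proof.
  intros E Hf n x. apply (ex_derive_ext (Derive_n f n)); [|apply Hf].
  intro; apply Derive_n_ext, E.
Qed.

Lemma smooth_Derive_n f j : smooth f -> smooth (Derive_n f j).
Proof.
  intros Hf n x. apply (ex_derive_ext (Derive_n f (n + j))); [|apply Hf].
  intro; symmetry; apply Derive_n_comp.
Qed.

Lemma smooth_plus f g : smooth f -> smooth g -> smooth (fun y => f y + g y).
Proof.
  intros Hf Hg n x.
  apply (ex_derive_ext (fun y => Derive_n f n y + Derive_n g n y)).
  - intro y; symmetry; apply Derive_n_plus; apply filter_forall;
      intros z k _; apply smooth_ex_derive_n; assumption.
  - apply (ex_derive_plus (Derive_n f n) (Derive_n g n)); [apply Hf | apply Hg].
Qed.

Lemma smooth_opp f : smooth f -> smooth (fun y => - f y).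
Proof.
  intros Hf n x. apply (ex_derive_ext (fun y => - Derive_n f n y)).
  - intro; symmetry; apply Derive_n_opp.
  - apply (ex_derive_opp (Derive_n f n)), Hf.
Qed.

Lemma smooth_mult_upto n : forall f g, smooth f -> smooth g ->
  forall j x, (j <= n)%nat -> ex_derive_n (fun y => f y * g y) j x.
Proof.
  induction n as [|n IH]; intros f g Hf Hg [|[|j]] x Hj; try exact I.
  - apply (ex_derive_mult f g); [apply (Hf 0%nat) | apply (Hg 0%nat)].
  - lia.
  - apply (ex_derive_mult f g); [apply (Hf 0%nat) | apply (Hg 0%nat)].
  - apply (ex_derive_ext
      (Derive_n (fun y => Derive f y * g y + f y * Derive g y) j)).
    { intro t. rewrite Derive_n_S. apply Derive_n_ext. intro y.
      symmetry; apply Derive_mult; [apply (Hf 0%nat) | apply (Hg 0%nat)]. }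
    assert (Hf' := smooth_Derive_n f 1 Hf). assert (Hg' := smooth_Derive_n g 1 Hg).
    apply (ex_derive_ext (fun y => Derive_n (fun z => Derive f z * g z) j y
                                 + Derive_n (fun z => f z * Derive g z) j y)).
    { intro y; symmetry; apply Derive_n_plus; apply filter_forall;
        intros z i Hi; apply IH; auto; lia. }
    apply (ex_derive_plus (Derive_n (fun z => Derive f z * g z) j)
                          (Derive_n (fun z => f z * Derive g z) j));
      [apply (IH _ _ Hf' Hg (S j)) | apply (IH _ _ Hf Hg' (S j))]; lia.
Qed.

Lemma smooth_mult f g : smooth f -> smooth g -> smooth (fun y => f y * g y).
Proof. intros Hf Hg n x. exact (smooth_mult_upto (S n) f g Hf Hg (S n) x (le_n _)). Qed.

Lemma smooth_curv gx gy : smooth gx -> smooth gy -> smooth (curv gx gy).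
Proof.
  intros Hx Hy. apply (smooth_ext (fun s =>
    Derive_n gx 1 s * Derive_n gy 2 s + - (Derive_n gy 1 s * Derive_n gx 2 s))).
  - intro; reflexivity.
  - apply smooth_plus; [|apply smooth_opp]; apply smooth_mult; apply smooth_Derive_n; assumption.
Qed.

Lemma Derive_n_periodic f : (forall s, f (s + 1) = f s) ->
  forall n s, Derive_n f n (s + 1) = Derive_n f n s.
Proof. intros Hf n s. rewrite <- Derive_n_comp_trans. apply Derive_n_ext, Hf. Qed.

Lemma curv_periodic gx gy :
  (forall s, gx (s + 1) = gx s /\ gy (s + 1) = gy s) ->
  forall s, curv gx gy (s + 1) = curv gx gy s.
Proof.
  intros H s. unfold curv. change (Derive gx) with (Derive_n gx 1).
  change (Derive gy) with (Derive_n gy 1).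
  assert (Hx : forall s, gx (s + 1) = gx s) by apply H.
  assert (Hy : forall s, gy (s + 1) = gy s) by apply H.
  rewrite !(Derive_n_periodic gx Hx), !(Derive_n_periodic gy Hy). reflexivity.
Qed.

Definition C0 (f : R -> R) : Prop := forall x, continuous f x.

Lemma C0_plus f g : C0 f -> C0 g -> C0 (fun x => f x + g x).
Proof. intros Hf Hg x. exact (continuous_plus f g x (Hf x) (Hg x)). Qed.

Lemma C0_mult f g : C0 f -> C0 g -> C0 (fun x => f x * g x).
Proof. intros Hf Hg x. exact (continuous_mult f g x (Hf x) (Hg x)). Qed.

Lemma C0_opp f : C0 f -> C0 (fun x => - f x).
Proof. intros Hf x. exact (continuous_opp f x (Hf x)). Qed.

Lemma C0_const c : C0 (fun _ => c).
Proof. intro; apply continuous_const. Qed.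

Lemma C0_minus f g : C0 f -> C0 g -> C0 (fun x => f x - g x).
Proof. intros Hf Hg. apply C0_plus; [|apply C0_opp]; assumption. Qed.

Lemma C0_pow2 f : C0 f -> C0 (fun x => f x ^ 2).
Proof.
  intros Hf x. apply (continuous_ext (fun x => f x * f x)); [intro; simpl; ring|].
  apply C0_mult; assumption.
Qed.

Lemma C0_ext f g : (forall x, f x = g x) -> C0 f -> C0 g.
Proof. intros E Hf x. apply (continuous_ext f g); auto. Qed.

Lemma C0_ex_derive f : (forall x, ex_derive f x) -> C0 f.
Proof. intros H x. apply (@ex_derive_continuous R_AbsRing R_NormedModule), H. Qed.

Lemma C0_Derive_n f j : smooth f -> C0 (Derive_n f j).
Proof. intros Hf. apply C0_ex_derive, Hf. Qed.

Lemma C0_smooth f : smooth f -> C0 f.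
Proof. apply (C0_Derive_n f 0). Qed.

Fixpoint sum_lt (g : nat -> R) (n : nat) : R :=
  match n with O => 0 | S n => sum_lt g n + g n end.

Lemma C0_sum_lt (F : nat -> R -> R) n :
  (forall i, C0 (F i)) -> C0 (fun s => sum_lt (fun i => F i s) n).
Proof.
  intros H. induction n as [|n IH]; simpl; [apply C0_const | apply C0_plus; auto].
Qed.

Ltac solve_C0 := repeat match goal with
  | |- forall _ : nat, C0 _ => intro
  | |- C0 (fun _ => ?c) => apply (C0_const c)
  | |- C0 (fun s => @?f s + @?g s) => apply (C0_plus f g)
  | |- C0 (fun s => @?f s - @?g s) => apply (C0_minus f g)
  | |- C0 (fun s => @?f s * @?g s) => apply (C0_mult f g)
  | |- C0 (fun s => - @?f s) => apply (C0_opp f)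
  | |- C0 (fun s => @?f s ^ 2) => apply (C0_pow2 f)
  | |- C0 (fun s => sum_lt (fun i => @?F i s) _) => apply (C0_sum_lt F); intro
  | |- C0 (fun s => Derive_n ?f _ s) => apply C0_Derive_n; assumption
  | |- C0 (Derive_n ?f _) => apply C0_Derive_n; assumption
  | |- C0 _ => first [assumption | apply C0_smooth; assumption]
  end.

Lemma ex_RInt_C0 f a b : C0 f -> ex_RInt f a b.
Proof. intros H. apply (@ex_RInt_continuous R_CompleteNormedModule). intros; apply H. Qed.

Lemma RInt_plus_C0 f g a b : C0 f -> C0 g ->
  RInt (fun x => f x + g x) a b = RInt f a b + RInt g a b.
Proof. intros Hf Hg. exact (RInt_plus f g a b (ex_RInt_C0 f a b Hf) (ex_RInt_C0 g a b Hg)). Qed.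

Lemma RInt_scal_C0 f c a b : C0 f -> RInt (fun x => c * f x) a b = c * RInt f a b.
Proof. intros Hf. exact (RInt_scal f a b c (ex_RInt_C0 f a b Hf)). Qed.

Lemma RInt_le_C0 f g a b : a <= b -> C0 f -> C0 g ->
  (forall x, a <= x <= b -> f x <= g x) -> RInt f a b <= RInt g a b.
Proof. intros Hab Hf Hg H. apply RInt_le; auto using ex_RInt_C0. intros; apply H; lra. Qed.

Lemma RInt_ge0_C0 f a b : a <= b -> C0 f -> (forall x, a <= x <= b -> 0 <= f x) ->
  0 <= RInt f a b.
Proof. intros Hab Hf H. apply RInt_ge_0; auto using ex_RInt_C0. intros; apply H; lra. Qed.

Lemma RInt_Chasles_C0 f a b c : C0 f -> RInt f a b + RInt f b c = RInt f a c.
Proof. intros Hf. exact (RInt_Chasles f a b c (ex_RInt_C0 f a b Hf) (ex_RInt_C0 f b c Hf)). Qed.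

Lemma RInt_ext_R (f g : R -> R) a b : (forall x, f x = g x) -> RInt f a b = RInt g a b.
Proof. intros H. apply RInt_ext. intros; apply H. Qed.

Lemma RInt_const_R (c a b : R) : RInt (fun _ => c) a b = (b - a) * c.
Proof. rewrite RInt_const. reflexivity. Qed.

Lemma RInt_swap_C0 f a b : C0 f -> RInt f b a = - RInt f a b.
Proof. intros Hf. rewrite <- (opp_RInt_swap f a b) by (apply ex_RInt_C0, Hf). reflexivity. Qed.

Lemma RInt_sum_lt (F : nat -> R -> R) n a b : (forall i, C0 (F i)) ->
  RInt (fun s => sum_lt (fun i => F i s) n) a b = sum_lt (fun i => RInt (F i) a b) n.
Proof.
  intros H. induction n as [|n IH]; simpl.
  - rewrite RInt_const_R. apply Rmult_0_r.
  - rewrite RInt_plus_C0, IH; [reflexivity | apply C0_sum_lt | ]; auto.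
Qed.

Lemma RInt_derive_C0 F f a b : (forall x, is_derive F x (f x)) -> C0 f ->
  RInt f a b = F b - F a.
Proof. intros HF Hf. apply is_RInt_unique, (is_RInt_derive F f); auto. Qed.

Lemma is_derive_mult_R f g x df dg : is_derive f x df -> is_derive g x dg ->
  is_derive (fun y => f y * g y) x (df * g x + f x * dg).
Proof. intros Hf Hg. apply (is_derive_mult f g x df dg Hf Hg), Rmult_comm. Qed.

Lemma amgm t a b : 0 < t -> 2 * a * b <= t * a ^ 2 + / t * b ^ 2.
Proof.
  intros Ht. assert (H : 0 <= / t * (t * a - b) ^ 2)
    by (apply Rmult_le_pos; [left; apply Rinv_0_lt_compat | apply pow2_ge_0]; lra).
  replace (/ t * (t * a - b) ^ 2) with (t * a ^ 2 - 2 * a * b + / t * b ^ 2) in H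
    by (field; lra).
  lra.
Qed.

Definition sqnorm (f : R -> R) : R := RInt (fun x => f x ^ 2) 0 1.

Lemma sqnorm_ge0 f : C0 f -> 0 <= sqnorm f.
Proof. intros Hf. apply RInt_ge0_C0; [lra | solve_C0 | intros; apply pow2_ge_0]. Qed.

Lemma RInt_le_RInt01 g h a b : C0 g -> C0 h -> (forall x, Rabs (g x) <= h x) ->
  0 <= a <= 1 -> 0 <= b <= 1 -> RInt g a b <= RInt h 0 1.
Proof.
  intros Hg Hh Hgh Ha Hb.
  assert (Hh0 : forall x, 0 <= h x) by (intro x; eapply Rle_trans; [apply Rabs_pos | apply Hgh]).
  assert (Hsub : forall c d, 0 <= c <= d -> d <= 1 -> RInt h c d <= RInt h 0 1).
  { intros c d Hc Hd.
    rewrite <- (RInt_Chasles_C0 h 0 c 1), <- (RInt_Chasles_C0 h c d 1) by assumption.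
    assert (0 <= RInt h 0 c) by (apply RInt_ge0_C0; auto; lra).
    assert (0 <= RInt h d 1) by (apply RInt_ge0_C0; auto; lra).
    lra. }
  destruct (Rle_lt_dec a b) as [Hab | Hba].
  - apply Rle_trans with (RInt h a b); [apply RInt_le_C0; auto | apply Hsub; lra].
    intros x _. eapply Rle_trans; [apply Rle_abs | apply Hgh].
  - assert (E : RInt g a b = RInt (fun x => -1 * g x) b a).
    { rewrite RInt_scal_C0, (RInt_swap_C0 g b a) by assumption. lra. }
    rewrite E.
    apply Rle_trans with (RInt h b a);
      [apply RInt_le_C0; [lra | solve_C0 | assumption |] | apply Hsub; lra].
    intros x _. pose proof (Hgh x) as Hx. pose proof (Rle_abs (- g x)) as Hn.
    rewrite Rabs_Ropp in Hn. lra.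
Qed.

Lemma sq_diff_RInt (v w : R -> R) a b : (forall x, is_derive v x (w x)) -> C0 w ->
  v b ^ 2 - v a ^ 2 = RInt (fun x => 2 * v x * w x) a b.
Proof.
  intros Hv Hw. assert (Cv : C0 v) by (apply C0_ex_derive; intro; eexists; apply Hv).
  symmetry; apply (RInt_derive_C0 (fun y => v y ^ 2)); [|solve_C0].
  intro x. apply (is_derive_ext (fun y => v y * v y)); [intro; simpl; ring|].
  replace (2 * v x * w x) with (w x * v x + v x * w x) by ring.
  apply is_derive_mult_R; apply Hv.
Qed.

Lemma sq_le_of_vanishing (v w : R -> R) c s : (forall x, is_derive v x (w x)) -> C0 w ->
  0 <= c <= 1 -> v c = 0 -> 0 <= s <= 1 ->
  v s ^ 2 <= / 2 * sqnorm v + 2 * sqnorm w.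
Proof.
  intros Hv Hw Hc Hvc Hs. assert (Cv : C0 v) by (apply C0_ex_derive; intro; eexists; apply Hv).
  replace (v s ^ 2) with (v s ^ 2 - v c ^ 2) by (rewrite Hvc; ring).
  rewrite (sq_diff_RInt v w) by assumption.
  unfold sqnorm. rewrite <- !RInt_scal_C0, <- RInt_plus_C0 by solve_C0.
  apply RInt_le_RInt01; [solve_C0 | solve_C0 | | assumption | assumption].
  intro x. pose proof (amgm (/ 2) (v x) (w x) ltac:(lra)).
  pose proof (amgm (/ 2) (- v x) (w x) ltac:(lra)).
  rewrite Rinv_inv in *. replace ((- v x) ^ 2) with (v x ^ 2) in * by ring.
  apply Rabs_le. split; lra.
Qed.

Lemma poincare (v w : R -> R) c : (forall x, is_derive v x (w x)) -> C0 w ->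
  0 <= c <= 1 -> v c = 0 ->
  sqnorm v <= 4 * sqnorm w /\ forall s, 0 <= s <= 1 -> v s ^ 2 <= 4 * sqnorm w.
Proof.
  intros Hv Hw Hc Hvc. assert (Cv : C0 v) by (apply C0_ex_derive; intro; eexists; apply Hv).
  assert (Hn : sqnorm v <= / 2 * sqnorm v + 2 * sqnorm w).
  { unfold sqnorm at 1.
    apply Rle_trans with (RInt (fun _ => / 2 * sqnorm v + 2 * sqnorm w) 0 1).
    - apply RInt_le_C0; [lra | solve_C0 | solve_C0 |].
      intros; apply (sq_le_of_vanishing v w c); assumption.
    - rewrite RInt_const_R. lra. }
  split; [lra|]. intros s Hs.
  pose proof (sq_le_of_vanishing v w c s Hv Hw Hc Hvc Hs). lra.
Qed.

Lemma sqnorm_interpolation (v w z : R -> R) t : (forall x, is_derive v x (w x)) ->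
  (forall x, is_derive w x (z x)) -> C0 z -> v 1 * w 1 = v 0 * w 0 -> 0 < t ->
  2 * sqnorm w <= t * sqnorm z + / t * sqnorm v.
Proof.
  intros Hv Hw Hz Hper Ht.
  assert (Cv : C0 v) by (apply C0_ex_derive; intro; eexists; apply Hv).
  assert (Cw : C0 w) by (apply C0_ex_derive; intro; eexists; apply Hw).
  assert (Hparts : sqnorm w = RInt (fun x => - v x * z x) 0 1).
  { assert (H0 : RInt (fun x => w x * w x + v x * z x) 0 1 = 0).
    { rewrite (RInt_derive_C0 (fun y => v y * w y)); [lra | | solve_C0].
      intro; apply is_derive_mult_R; auto. }
    rewrite RInt_plus_C0 in H0 by solve_C0.
    replace (RInt (fun x => - v x * z x) 0 1) with (-1 * RInt (fun x => v x * z x) 0 1)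
      by (rewrite <- RInt_scal_C0 by solve_C0; apply RInt_ext_R; intros; ring).
    unfold sqnorm. rewrite (RInt_ext_R _ (fun x => w x * w x)) by (intros; simpl; ring). lra. }
  rewrite Hparts. unfold sqnorm.
  rewrite <- !RInt_scal_C0, <- RInt_plus_C0 by solve_C0.
  apply RInt_le_C0; [lra | solve_C0 | solve_C0 |].
  intros x _. pose proof (amgm t (z x) (- v x) Ht). nra.
Qed.

Lemma derive_vanishes_of_periodic (F f : R -> R) : F 0 = F 1 -> (forall x, is_derive F x (f x)) ->
  exists c, 0 <= c <= 1 /\ f c = 0.
Proof.
  intros HF Hd. destruct (MVT_gen F 0 1 f) as [c [Hc E]].
  - intros; apply Hd.
  - intros x _. apply continuity_pt_filterlim, (@ex_derive_continuous R_AbsRing R_NormedModule).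
    eexists; apply Hd.
  - rewrite Rmin_left, Rmax_right in Hc by lra. exists c. split; [assumption | nra].
Qed.

Definition interpolating (a : nat -> R) : Prop :=
  (forall j, 0 <= a j) /\
  (forall j t, 0 < t -> 2 * a (S j) <= t * a (S (S j)) + / t * a j).

Lemma interpolating_next m d eta : 0 < eta -> exists C, 0 <= C /\
  forall a, interpolating a -> a (m + d)%nat <= eta * a (S (m + d)) + C * a m.
Proof.
  intros Heta. induction d as [|d [C [HC IH]]].
  - exists 1. split; [lra|]. intros a [Ha _]. rewrite Nat.add_0_r.
    pose proof (Ha (S m)). nra.
  - exists (C / eta). split; [apply Rdiv_le_0_compat; lra|].
    intros a Ha. specialize (IH a Ha). destruct Ha as [Hpos Hint].
    rewrite Nat.add_succ_r. pose proof (Hint (m + d)%nat eta Heta) as Hstep.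
    assert (Hdiv : / eta * a (m + d)%nat <= a (S (m + d)) + C / eta * a m).
    { replace (a (S (m + d)) + C / eta * a m) with (/ eta * (eta * a (S (m + d)) + C * a m))
        by (field; lra).
      apply Rmult_le_compat_l; [left; apply Rinv_0_lt_compat|]; assumption. }
    lra.
Qed.

Lemma interpolating_bound m n eta : 0 < eta -> exists C, 0 <= C /\
  forall a, interpolating a -> forall j, (m <= j < m + n)%nat ->
  a j <= eta * a (m + n)%nat + C * a m.
Proof.
  revert eta. induction n as [|n IH]; intros eta Heta.
  - exists 0. split; [lra | intros; lia].
  - destruct (IH 1 Rlt_0_1) as [C0 [HC0 H0]].
    destruct (interpolating_next m n eta Heta) as [C1 [HC1 H1]].
    exists (C0 + C1). split; [lra|]. intros a Ha j Hj.
    pose proof (proj1 Ha m). specialize (H1 a Ha). rewrite <- Nat.add_succ_r in H1.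
    destruct (Nat.eq_dec j (m + n)) as [-> | Hjn].
    + nra.
    + specialize (H0 a Ha j ltac:(lia)). nra.
Qed.

Lemma le_pow_chain (a : nat -> R) c i n : 0 <= c ->
  (forall j, (i <= j < n)%nat -> a j <= c * a (S j)) -> (i <= n)%nat ->
  a i <= c ^ (n - i) * a n.
Proof.
  intros Hc Hchain Hin. remember (n - i)%nat as d eqn:Hd. revert i Hchain Hin Hd.
  induction d as [|d IH]; intros i Hchain Hin Hd.
  - replace i with n by lia. simpl; lra.
  - apply Rle_trans with (c * a (S i)); [apply Hchain; lia|].
    simpl. rewrite Rmult_assoc. apply Rmult_le_compat_l; [assumption|].
    apply IH; [intros; apply Hchain | |]; lia.
Qed.

Lemma sum_lt_le f g n : (forall i, (i < n)%nat -> f i <= g i) -> sum_lt f n <= sum_lt g n.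
Proof.
  induction n as [|n IH]; intros H; simpl; [lra|].
  pose proof (H n (Nat.lt_succ_diag_r n)). assert (sum_lt f n <= sum_lt g n) by (apply IH; auto).
  lra.
Qed.

Lemma sum_lt_scal c g n : sum_lt (fun i => c * g i) n = c * sum_lt g n.
Proof. induction n as [|n IH]; simpl; [ring | rewrite IH; ring]. Qed.

Lemma sum_lt_const_bound g n B : (forall i, (i < n)%nat -> g i <= B) -> sum_lt g n <= INR n * B.
Proof.
  intros H. apply Rle_trans with (sum_lt (fun _ => B) n); [apply sum_lt_le; assumption|].
  clear H. induction n as [|n IH]; simpl sum_lt; [simpl; lra|]. rewrite S_INR. lra.
Qed.

Lemma sum_lt_sqr_le g n : sum_lt g n ^ 2 <= 2 ^ n * sum_lt (fun i => g i ^ 2) n.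
Proof.
  induction n as [|n IH]; cbn [sum_lt]; [simpl; lra|].
  assert (H0 : 0 <= sum_lt (fun i => g i ^ 2) n)
    by (apply Rle_trans with (sum_lt (fun _ => 0) n);
        [clear; induction n; simpl; lra | apply sum_lt_le; intros; apply pow2_ge_0]).
  assert (H1 : 1 <= 2 ^ n) by (apply pow_R1_Rle; lra).
  change (2 ^ S n) with (2 * 2 ^ n).
  assert (Hsplit : (sum_lt g n + g n) ^ 2 <= 2 * sum_lt g n ^ 2 + 2 * g n ^ 2)
    by (pose proof (pow2_ge_0 (sum_lt g n - g n)); nra).
  assert (Hlast : g n ^ 2 <= 2 ^ n * g n ^ 2) by (pose proof (pow2_ge_0 (g n)); nra).
  lra.
Qed.

(* [Rrem m ka gx gy] is convertible to [remainder m ka (curv gx gy)]. *)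
Definition remainder (m : nat) (ka : R) (k : R -> R) (s : R) : R :=
  ((-1) ^ (m + 1) * Derive_n k (2 * m + 2) s
   - / 2 * k s * (Derive_n k m s) ^ 2
   + k s * sum_f 1 m (fun r => (-1) ^ (r + 1) * Derive_n k (m - r) s * Derive_n k (m + r) s))
  - (-1) ^ (m + 1) * (Derive_n k (2 * m + 2) s + ka ^ 2 * Derive_n k (2 * m) s).

Lemma sum_f_R0_sum_lt g n : sum_f_R0 g n = sum_lt g n + g n.
Proof. induction n as [|n IH]; simpl; [ring | rewrite IH; ring]. Qed.

Lemma remainder_split m ka k s : (1 <= m)%nat ->
  remainder m ka k s =
    (-1) ^ (m + 1) * ((k s - ka) * (k s + ka) * Derive_n k (2 * m) s)
    + k s * sum_lt (fun i => (-1) ^ (i + 1 + 1) * Derive_n k (m - (i + 1)) s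
                              * Derive_n k (m + (i + 1)) s) (m - 1)
    - / 2 * k s * Derive_n k m s ^ 2.
Proof.
  intros Hm. destruct m as [|p]; [lia|].
  unfold remainder, sum_f. replace (S p - 1)%nat with p by lia.
  rewrite sum_f_R0_sum_lt. cbv beta.
  replace (S p - (p + 1))%nat with 0%nat by lia.
  replace (S p + (p + 1))%nat with (2 * S p)%nat by lia.
  replace (p + 1 + 1)%nat with (S p + 1)%nat by lia.
  simpl Derive_n at 5. ring.
Qed.

Definition curv_sq_bound (m : nat) (ka : R) : R := 8 * 4 ^ m + 8 * ka ^ 2.

Definition remainder_const (m : nat) (ka : R) : R :=
  3 * curv_sq_bound m ka * (4 * 4 ^ m * (1 + 2 ^ (m - 1) * INR (m - 1)) + 1).

Lemma neg1_pow_sqr n : ((-1) ^ n) ^ 2 = 1.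
Proof.
  rewrite <- pow_mult, Nat.mul_comm, pow_mult. replace ((-1) ^ 2) with 1 by ring. apply pow1.
Qed.

Section RemainderEstimate.

Variables (k : R -> R) (ka : R) (m : nat).
Hypothesis k_smooth : smooth k.
Hypothesis k_periodic : forall s, k (s + 1) = k s.
Hypothesis k_mean : RInt k 0 1 = ka.
Hypothesis m_pos : (1 <= m)%nat.
Hypothesis Em_small : sqnorm (Derive_n k m) <= 1.

Let a (j : nat) : R := sqnorm (Derive_n k j).

Lemma Derive_n_is_derive j x : is_derive (Derive_n k j) x (Derive_n k (S j) x).
Proof. apply Derive_correct, k_smooth. Qed.

Lemma interpolating_sqnorm_Derive_n : interpolating a.
Proof.
  split.
  - intro; apply sqnorm_ge0; solve_C0.
  - intros j t Ht.
    apply sqnorm_interpolation; try apply Derive_n_is_derive; [solve_C0 | | assumption].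
    rewrite <- (Derive_n_periodic k k_periodic j 0), <- (Derive_n_periodic k k_periodic (S j) 0).
    rewrite Rplus_0_l. reflexivity.
Qed.

Lemma k_attains_mean : exists c, 0 <= c <= 1 /\ k c - ka = 0.
Proof.
  apply (derive_vanishes_of_periodic (fun s => RInt k 0 s - ka * s)).
  - rewrite RInt_point, k_mean. simpl. change zero with 0. ring.
  - intro x. apply (is_derive_minus (RInt k 0) (fun s => ka * s)).
    + apply (is_derive_RInt k (RInt k 0) 0 x); [|apply C0_smooth, k_smooth].
      apply filter_forall. intro b. apply (@RInt_correct R_CompleteNormedModule).
      apply ex_RInt_C0, C0_smooth, k_smooth.
    + auto_derive; [trivial | ring].
Qed.

Lemma Derive_n_poincare j : (1 <= j)%nat ->
  a j <= 4 * a (S j) /\ forall s, 0 <= s <= 1 -> Derive_n k j s ^ 2 <= 4 * a (S j).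
Proof.
  intros Hj. destruct j as [|j]; [lia|].
  destruct (derive_vanishes_of_periodic (Derive_n k j) (Derive_n k (S j))) as [c [Hc Hz]].
  - rewrite <- (Derive_n_periodic k k_periodic j 0), Rplus_0_l. reflexivity.
  - apply Derive_n_is_derive.
  - apply (poincare _ _ c); [apply Derive_n_is_derive | solve_C0 | assumption | assumption].
Qed.

Lemma sqnorm_Derive_n_le_pow i : (1 <= i <= m)%nat -> a i <= 4 ^ m * a m.
Proof.
  intros Hi. apply Rle_trans with (4 ^ (m - i) * a m).
  - apply le_pow_chain; [lra | intros; apply Derive_n_poincare; lia | lia].
  - apply Rmult_le_compat_r; [apply interpolating_sqnorm_Derive_n | apply Rle_pow; [lra | lia]].
Qed.

Let A : R := 4 * 4 ^ m * a m.
Let B : R := curv_sq_bound m ka.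

Lemma k_minus_mean_sq_le s : 0 <= s <= 1 -> (k s - ka) ^ 2 <= A.
Proof.
  intros Hs. destruct k_attains_mean as [c [Hc Hz]].
  assert (Hk : (k s - ka) ^ 2 <= 4 * a 1).
  { apply (poincare (fun s => k s - ka) (Derive_n k 1) c);
      [| solve_C0 | assumption | assumption | assumption].
    intro x. auto_derive; [apply (k_smooth 0%nat) | apply Rmult_1_l]. }
  pose proof (sqnorm_Derive_n_le_pow 1 ltac:(lia)). unfold A. lra.
Qed.

Lemma Derive_n_low_sq_le i s : (1 <= i < m)%nat -> 0 <= s <= 1 -> Derive_n k i s ^ 2 <= A.
Proof.
  intros Hi Hs. pose proof (proj2 (Derive_n_poincare i (proj1 Hi)) s Hs).
  pose proof (sqnorm_Derive_n_le_pow (S i) ltac:(lia)). unfold A. lra.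
Qed.

Lemma k_sq_le s : 0 <= s <= 1 -> k s ^ 2 <= B /\ (k s + ka) ^ 2 <= B.
Proof.
  intros Hs. pose proof (k_minus_mean_sq_le s Hs) as Hu.
  assert (HA : A <= 4 * 4 ^ m).
  { assert (a m <= 1) by exact Em_small. pose proof (pow_le 4 m ltac:(lra)). unfold A. nra. }
  pose proof (pow2_ge_0 (k s - ka - ka)). pose proof (pow2_ge_0 (k s - ka - 2 * ka)).
  unfold B, curv_sq_bound. split; nra.
Qed.

Lemma remainder_sq_le s : 0 <= s <= 1 ->
  remainder m ka k s ^ 2 <=
    3 * (A * B * Derive_n k (2 * m) s ^ 2
         + B * 2 ^ (m - 1) * A * sum_lt (fun i => Derive_n k (m + (i + 1)) s ^ 2) (m - 1)
         + B * a (S m) * Derive_n k m s ^ 2).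
Proof.
  intros Hs. rewrite remainder_split by assumption.
  destruct (k_sq_le s Hs) as [Hk Hkp]. pose proof (k_minus_mean_sq_le s Hs) as Hu.
  set (X := (-1) ^ (m + 1) * ((k s - ka) * (k s + ka) * Derive_n k (2 * m) s)).
  set (g := fun i => (-1) ^ (i + 1 + 1) * Derive_n k (m - (i + 1)) s * Derive_n k (m + (i + 1)) s).
  set (Y := k s * sum_lt g (m - 1)).
  set (Z := / 2 * k s * Derive_n k m s ^ 2).
  assert (HX : X ^ 2 <= A * B * Derive_n k (2 * m) s ^ 2).
  { unfold X. rewrite !Rpow_mult_distr, neg1_pow_sqr, Rmult_1_l.
    apply Rmult_le_compat_r; [apply pow2_ge_0|].
    apply Rmult_le_compat; auto using pow2_ge_0. }
  assert (HY : Y ^ 2 <=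
    B * 2 ^ (m - 1) * A * sum_lt (fun i => Derive_n k (m + (i + 1)) s ^ 2) (m - 1)).
  { unfold Y. rewrite Rpow_mult_distr, !Rmult_assoc.
    apply Rmult_le_compat; auto using pow2_ge_0.
    eapply Rle_trans; [apply sum_lt_sqr_le|]. apply Rmult_le_compat_l; [apply pow_le; lra|].
    rewrite <- sum_lt_scal. apply sum_lt_le. intros i Hi. unfold g.
    rewrite !Rpow_mult_distr, neg1_pow_sqr, Rmult_1_l.
    apply Rmult_le_compat_r; [apply pow2_ge_0 | apply Derive_n_low_sq_le; [lia | assumption]]. }
  assert (HZ : Z ^ 2 <= B * a (S m) * Derive_n k m s ^ 2).
  { pose proof (proj2 (Derive_n_poincare m m_pos) s Hs) as Hm.
    replace (Z ^ 2) with (/ 4 * k s ^ 2 * Derive_n k m s ^ 2 * Derive_n k m s ^ 2)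
      by (unfold Z; field).
    apply Rmult_le_compat_r; [apply pow2_ge_0|].
    pose proof (pow2_ge_0 (k s)). pose proof (pow2_ge_0 (Derive_n k m s)). nra. }
  pose proof (pow2_ge_0 (X - Y)). pose proof (pow2_ge_0 (X + Z)). pose proof (pow2_ge_0 (Y + Z)).
  nra.
Qed.

Lemma C0_remainder : C0 (remainder m ka k).
Proof.
  apply (C0_ext (fun s =>
    (-1) ^ (m + 1) * ((k s - ka) * (k s + ka) * Derive_n k (2 * m) s)
    + k s * sum_lt (fun i => (-1) ^ (i + 1 + 1) * Derive_n k (m - (i + 1)) s
                              * Derive_n k (m + (i + 1)) s) (m - 1)
    - / 2 * k s * Derive_n k m s ^ 2)).
  - intro; symmetry; apply remainder_split, m_pos.
  - solve_C0.
Qed.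

Lemma remainder_sq_integral_le Q : (forall j, (m < j <= 2 * m)%nat -> a j <= Q) ->
  RInt (fun s => remainder m ka k s ^ 2) 0 1 <= remainder_const m ka * a m * Q.
Proof.
  intros HQ.
  eapply Rle_trans; [apply RInt_le_C0; [lra | | | apply remainder_sq_le] | ].
  { apply C0_pow2, C0_remainder. }
  { solve_C0. }
  rewrite RInt_scal_C0, !RInt_plus_C0, !RInt_scal_C0, RInt_sum_lt by solve_C0.
  change (RInt (fun s => Derive_n k (2 * m) s ^ 2) 0 1) with (a (2 * m)%nat).
  change (RInt (fun s => Derive_n k m s ^ 2) 0 1) with (a m).
  change (sum_lt (fun i => RInt (fun s => Derive_n k (m + (i + 1)) s ^ 2) 0 1) (m - 1))
    with (sum_lt (fun i => a (m + (i + 1))%nat) (m - 1)).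
  assert (Hsum : sum_lt (fun i => a (m + (i + 1))%nat) (m - 1) <= INR (m - 1) * Q)
    by (apply sum_lt_const_bound; intros; apply HQ; lia).
  assert (Ha : 0 <= a m) by apply interpolating_sqnorm_Derive_n.
  assert (HA : 0 <= A) by (unfold A; pose proof (pow_le 4 m ltac:(lra)); nra).
  assert (HB : 0 <= B) by (unfold B, curv_sq_bound; pose proof (pow_le 4 m ltac:(lra));
                           pose proof (pow2_ge_0 ka); lra).
  assert (H2 : 0 <= 2 ^ (m - 1)) by (apply pow_le; lra).
  assert (T1 : A * B * a (2 * m)%nat <= A * B * Q)
    by (apply Rmult_le_compat_l; [nra | apply HQ; lia]).
  assert (T2 : B * 2 ^ (m - 1) * A * sum_lt (fun i => a (m + (i + 1))%nat) (m - 1)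
               <= B * 2 ^ (m - 1) * A * (INR (m - 1) * Q))
    by (apply Rmult_le_compat_l; [apply Rmult_le_pos; [nra | assumption] | assumption]).
  assert (T3 : B * a (S m) * a m <= B * Q * a m)
    by (apply Rmult_le_compat_r; [| apply Rmult_le_compat_l; [| apply HQ; lia]]; assumption).
  replace (remainder_const m ka * a m * Q)
    with (3 * (A * B * Q + B * 2 ^ (m - 1) * A * (INR (m - 1) * Q) + B * Q * a m))
    by (unfold remainder_const, A, B; ring).
  lra.
Qed.

End RemainderEstimate.

Lemma remainder_estimate m (ka delta : R) : (1 <= m)%nat -> 0 < delta -> exists C, forall k,
  smooth k -> (forall s, k (s + 1) = k s) -> RInt k 0 1 = ka ->
  sqnorm (Derive_n k m) <= 1 ->
  RInt (fun s => remainder m ka k s ^ 2) 0 1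
    <= delta * sqnorm (Derive_n k (2 * m + 2)) + C * sqnorm (Derive_n k m) ^ 2.
Proof.
  intros Hm Hdelta. set (M := remainder_const m ka).
  assert (HM : 0 < M).
  { unfold M, remainder_const, curv_sq_bound.
    pose proof (pow_lt 4 m ltac:(lra)). pose proof (pow_le 2 (m - 1) ltac:(lra)).
    pose proof (pos_INR (m - 1)). pose proof (pow2_ge_0 ka).
    assert (0 <= 2 ^ (m - 1) * INR (m - 1)) by (apply Rmult_le_pos; assumption).
    apply Rmult_lt_0_compat; nra. }
  destruct (interpolating_bound m (m + 2) (delta / M)) as [C [HC Hbound]];
    [apply Rdiv_lt_0_compat; assumption|].
  exists (M * C). intros k Hk Hper Hmean Hsmall.
  set (P := sqnorm (Derive_n k (2 * m + 2))). set (Nm := sqnorm (Derive_n k m)).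
  assert (Hint := interpolating_sqnorm_Derive_n k Hk Hper).
  assert (HP : 0 <= P) by apply Hint.
  assert (HNm : 0 <= Nm) by apply Hint.
  replace (m + (m + 2))%nat with (2 * m + 2)%nat in Hbound by lia.
  assert (Hmiddle : forall j, (m < j <= 2 * m)%nat ->
                    sqnorm (Derive_n k j) <= delta / M * P + C * Nm)
    by (intros j Hj; apply (Hbound _ Hint); lia).
  pose proof (remainder_sq_integral_le k ka m Hk Hper Hmean Hm Hsmall _ Hmiddle) as Hrem.
  cbv beta in Hrem. fold M Nm in Hrem.
  assert (Hexpand : M * Nm * (delta / M * P + C * Nm) = delta * Nm * P + M * C * Nm ^ 2)
    by (field; lra).
  assert (delta * Nm * P <= delta * P).
  { rewrite Rmult_assoc. apply Rmult_le_compat_l; [lra|]. fold Nm in Hsmall. nra. }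
  lra.
Qed.

Theorem mainTheorem8 :
  forall (m : nat) (omega : Z),
    (1 <= m)%nat -> omega <> 0%Z ->
    let kappa := 2 * PI * IZR omega in
    forall delta : R, 0 < delta < 1 ->
    exists epsR C : R, 0 < epsR /\
      forall gx gy : R -> R,
        closed_unit_length_curve gx gy ->
        turning_number gx gy = IZR omega ->
        Em m gx gy <= epsR ->
        RInt (fun s => (Rrem m kappa gx gy s)^2) 0 1
          <= delta * Pm m gx gy + C * (Em m gx gy)^2.
Proof.
  intros m omega Hm _ kappa delta Hdelta.
  destruct (remainder_estimate m kappa delta Hm (proj1 Hdelta)) as [C HC].
  exists (/ 2), (4 * C). split; [lra|].
  intros gx gy [Hx [Hy [Hper _]]] Hturn HE.
  assert (Hmean : RInt (curv gx gy) 0 1 = kappa).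
  { unfold turning_number in Hturn. unfold kappa. rewrite <- Hturn.
    assert (E : forall I : R, I = 2 * PI * (/ (2 * PI) * I)) by (intro; field; apply PI_neq0).
    apply E. }
  assert (HEm : Em m gx gy = / 2 * sqnorm (Derive_n (curv gx gy) m)) by reflexivity.
  rewrite HEm in HE |- *.
  replace (4 * C * (/ 2 * sqnorm (Derive_n (curv gx gy) m)) ^ 2)
    with (C * sqnorm (Derive_n (curv gx gy) m) ^ 2) by field.
  apply HC; [apply smooth_curv | apply curv_periodic | | lra]; assumption.
Qed.
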